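(* Let $(X,f)$ be a dynamical system and $\mathbf{a}=(a_1,\dots,a_r)\in\mathbb{N}^r_*$. The following are equivalent: (1) $(X,f)$ is $\Delta$-$\mathbf{a}$-transitive; (2) $(X,f)$ is $\mathcal{F}[\mathbf{a}]$-point transitive; (3) $Trans_{\mathcal{F}[\mathbf{a}]}(X,f)$ is residual in $X$.
   Context: A dynamical system is a pair $(X,f)$ with $X$ a compact metric space and $f:X\to X$ continuous. $\mathbb{N}=\{1,2,\dots\}$, $\mathbb{Z}_+=\{0,1,2,\dots\}$; $\mathbb{N}^r_*=\{(n_1,\dots,n_r)\in\mathbb{N}^r: n_1<\dots<n_r\}$. $N(x,U)=\{n\in\mathbb{N}: f^n(x)\in U\}$. For a family $\mathcal{F}$ of subsets of $\mathbb{N}$, $x$ is an $\mathcal{F}$-transitive point if $N(x,U)\in\mathcal{F}$ for every non-empty open $U\subset X$; $Trans_{\mathcal{F}}(X,f)$ is the set of such points; $(X,f)$ is $\mathcal{F}$-point transitive if it is non-empty. For a system $(Y,g)$, $y$ is a transitive point if its $\omega$-limit set equals $Y$. $(X,f)$ is $\Delta$-$\mathbf{a}$-transitive if there is $x\in X$ such that $(x,\dots,x)$ is a transitive point of $(X^r,f^{a_1}\times\dots\times f^{a_r})$. $\mathcal{F}[\mathbf{a}]$ is the collection of all $F\subset\mathbb{N}$ such that for every $(n_1,\dots,n_r)\in\mathbb{Z}_+^r$ there is $k\in\mathbb{N}$ with $ka_i+n_i\in F$ for all $i=1,\dots,r$. *)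

From Stdlib Require Import Reals List.
Open Scope R_scope.

Definition is_metric {X : Type} (d : X -> X -> R) : Prop :=
  (forall x y, 0 <= d x y) /\
  (forall x y, d x y = 0 <-> x = y) /\
  (forall x y, d x y = d y x) /\
  (forall x y z, d x z <= d x y + d y z).

Definition is_open {X : Type} (d : X -> X -> R) (U : X -> Prop) : Prop :=
  forall x, U x -> exists eps, 0 < eps /\ forall y, d x y < eps -> U y.

Definition is_compact {X : Type} (d : X -> X -> R) : Prop :=
  forall (I : Type) (U : I -> X -> Prop),
    (forall i, is_open d (U i)) ->
    (forall x, exists i, U i x) ->
    exists l : list I, forall x, exists i, In i l /\ U i x.

Definition is_continuous {X : Type} (d : X -> X -> R) (f : X -> X) : Prop :=
  forall x eps, 0 < eps -> exists delta, 0 < delta /\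
    forall y, d x y < delta -> d (f x) (f y) < eps.

Definition in_Nr_star (r : nat) (a : nat -> nat) : Prop :=
  (forall i, (i < r)%nat -> (1 <= a i)%nat) /\
  (forall i j, (i < j)%nat -> (j < r)%nat -> (a i < a j)%nat).

Definition hitting_set {X : Type} (f : X -> X) (x : X) (U : X -> Prop) : nat -> Prop :=
  fun n => (1 <= n)%nat /\ U (Nat.iter n f x).

Definition Fa (r : nat) (a : nat -> nat) (F : nat -> Prop) : Prop :=
  forall n : nat -> nat, exists k : nat, (1 <= k)%nat /\
    forall i, (i < r)%nat -> F (k * a i + n i)%nat.

Definition is_F_transitive_point {X : Type} (d : X -> X -> R) (f : X -> X)
  (Fam : (nat -> Prop) -> Prop) (x : X) : Prop :=
  forall U, is_open d U -> (exists y, U y) -> Fam (hitting_set f x U).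

Definition F_point_transitive {X : Type} (d : X -> X -> R) (f : X -> X)
  (Fam : (nat -> Prop) -> Prop) : Prop :=
  exists x, is_F_transitive_point d f Fam x.

Definition is_dense {X : Type} (d : X -> X -> R) (G : X -> Prop) : Prop :=
  forall V, is_open d V -> (exists y, V y) -> exists y, V y /\ G y.

Definition is_residual {X : Type} (d : X -> X -> R) (A : X -> Prop) : Prop :=
  exists G : nat -> X -> Prop,
    (forall m, is_open d (G m)) /\ (forall m, is_dense d (G m)) /\
    (forall x, (forall m, G m x) -> A x).

(* Delta-a-transitivity: (x,...,x) is a transitive point of
   (X^r, f^{a_1} x ... x f^{a_r}), i.e. its omega-limit set is all of X^r.
   X^r carries the (max) product metric; points of X^r are z : nat -> X,
   only the coordinates i < r matter. z lies in the omega-limit set of (x,..,x)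
   iff for every eps > 0 and N there is n >= N with
   d(f^{a_i n} x, z_i) < eps for all i < r. *)
Definition Delta_a_transitive {X : Type} (d : X -> X -> R) (f : X -> X)
  (r : nat) (a : nat -> nat) : Prop :=
  exists x : X, forall z : nat -> X, forall eps, 0 < eps -> forall N : nat,
    exists n : nat, (N <= n)%nat /\
      forall i, (i < r)%nat -> d (Nat.iter (a i * n)%nat f x) (z i) < eps.

(* Conversely, if x is F[a]-transitive, it first
     hits each target ball at some time m_i; the open set of points doing so
     is then returned to at times k a_i + (a_i C - m_i), which realigns all
     coordinates to the common time a_i (k + C).
   - (2) -> (3): F[a]-transitive points are stable under f and hence dense; the
     set of transitive points is the intersection of the open sets of points
     returning to a basic ball with prescribed offsets, each of which contains
     all transitive points.  (3) -> (2) is the Baire category theorem. *)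

From Stdlib Require Import Reals List Lra Lia Classical IndefiniteDescription Cantor.
Open Scope R_scope.

Lemma iter_add {X : Type} (f : X -> X) (m n : nat) (x : X) :
  Nat.iter (m + n) f x = Nat.iter m f (Nat.iter n f x).
Proof. induction m as [|m IH]; simpl; congruence. Qed.

Lemma iter_eq {X : Type} (f : X -> X) (m n : nat) (x : X) :
  m = n -> Nat.iter m f x = Nat.iter n f x.
Proof. intros ->; reflexivity. Qed.

Lemma finite_choice {A : Type} (a0 : A) (r : nat) (P : nat -> A -> Prop) :
  (forall i, (i < r)%nat -> exists y, P i y) ->
  exists g : nat -> A, forall i, (i < r)%nat -> P i (g i).
Proof.
  intro H.
  destruct (functional_choice (fun i y => (i < r)%nat -> P i y)) as [g Hg].
  - intro i. destruct (Compare_dec.lt_dec i r) as [Hi|Hi].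
    + destruct (H i Hi) as [y Hy]. exists y. auto.
    + exists a0. intro; lia.
  - exists g. auto.
Qed.

Lemma finite_upper_bound (r : nat) (m : nat -> nat) :
  exists c, forall i, (i < r)%nat -> (m i <= c)%nat.
Proof.
  induction r as [|r [c Hc]].
  - exists 0%nat; intros; lia.
  - exists (c + m r)%nat. intros i Hi.
    destruct (Nat.eq_dec i r) as [->|Hne]; [lia|].
    specialize (Hc i ltac:(lia)). lia.
Qed.

Lemma list_upper_bound (l : list nat) : exists M, forall i, In i l -> (i <= M)%nat.
Proof.
  induction l as [|h t [M HM]].
  - exists 0%nat; intros i [].
  - exists (h + M)%nat. intros i [->|Hi]; [lia|]. specialize (HM i Hi); lia.
Qed.

Lemma finite_common_radius (r : nat) (P : nat -> R -> Prop) :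
  (forall i e e', 0 < e' <= e -> P i e -> P i e') ->
  (forall i, (i < r)%nat -> exists e, 0 < e /\ P i e) ->
  exists e, 0 < e /\ forall i, (i < r)%nat -> P i e.
Proof.
  intros Hmono. induction r as [|r IH]; intro H.
  - exists 1; split; [lra | intros; lia].
  - destruct IH as [e1 [He1 H1]]. { intros i Hi; apply H; lia. }
    destruct (H r ltac:(lia)) as [e2 [He2 H2]].
    assert (Hmin : 0 < Rmin e1 e2) by (apply Rmin_glb_lt; auto).
    exists (Rmin e1 e2); split; [exact Hmin|].
    intros i Hi. destruct (Nat.eq_dec i r) as [->|Hne].
    + apply (Hmono r e2); [split; [exact Hmin | apply Rmin_r] | exact H2].
    + apply (Hmono i e1); [split; [exact Hmin | apply Rmin_l] | apply H1; lia].
Qed.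

Section Topology.
Variables (X : Type) (d : X -> X -> R).

Lemma open_finite_inter (r : nat) (W : nat -> X -> Prop) :
  (forall i, (i < r)%nat -> is_open d (W i)) ->
  is_open d (fun y => forall i, (i < r)%nat -> W i y).
Proof.
  intros HW x Hx.
  destruct (finite_common_radius r (fun i e => forall y, d x y < e -> W i y))
    as [e [He H]].
  - intros i e e' He' Hp y Hy. apply Hp. lra.
  - intros i Hi. exact (HW i Hi x (Hx i Hi)).
  - exists e; split; auto.
Qed.

Lemma open_preimage (g : X -> X) (U : X -> Prop) :
  is_continuous d g -> is_open d U -> is_open d (fun w => U (g w)).
Proof.
  intros Hg HU x Hx. destruct (HU _ Hx) as [e [He H]].
  destruct (Hg x e He) as [delta [Hdelta H2]]. exists delta; split; auto.
Qed.

Lemma iter_continuous (f : X -> X) (n : nat) :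
  is_continuous d f -> is_continuous d (Nat.iter n f).
Proof.
  intro Hf. induction n as [|n IH]; intros x eps He.
  - exists eps; split; auto.
  - destruct (Hf (Nat.iter n f x) eps He) as [d1 [Hd1 H1]].
    destruct (IH x d1 Hd1) as [d2 [Hd2 H2]].
    exists d2; split; auto. intros y Hy. simpl. auto.
Qed.

End Topology.

Section Metric.
Variables (X : Type) (d : X -> X -> R).
Hypothesis Hd : is_metric d.

Lemma dist_self (x : X) : d x x = 0.
Proof. destruct Hd as [_ [H _]]. apply H. reflexivity. Qed.

Lemma dist_sym (x y : X) : d x y = d y x.
Proof. destruct Hd as [_ [_ [H _]]]. apply H. Qed.

Lemma dist_triangle (x y z : X) : d x z <= d x y + d y z.
Proof. destruct Hd as [_ [_ [_ H]]]. apply H. Qed.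

Lemma ball_open (c : X) (e : R) : is_open d (fun y => d c y < e).
Proof.
  intros x Hx. exists (e - d c x); split; [lra|].
  intros y Hy. pose proof (dist_triangle c x y). lra.
Qed.

Lemma ball_nonempty (c : X) (e : R) : 0 < e -> exists y, d c y < e.
Proof. intro He. exists c. rewrite dist_self. exact He. Qed.

Lemma closed_ball_complement_open (c : X) (e : R) : is_open d (fun y => e < d c y).
Proof.
  intros x Hx. exists (d c x - e); split; [lra|].
  intros y Hy. pose proof (dist_triangle c y x). rewrite (dist_sym y x) in *. lra.
Qed.

Lemma closed_ball_in_dense_open (G : X -> Prop) (c : X) (e : R) :
  is_open d G -> is_dense d G -> 0 < e ->
  exists c' e', 0 < e' /\ forall w, d c' w <= e' -> d c w < e /\ G w.
Proof.
  intros HGo HGd He.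
  destruct (HGd _ (ball_open c e) (ball_nonempty c e He)) as [y [Hy Gy]].
  destruct (ball_open c e y Hy) as [e1 [He1 H1]].
  destruct (HGo y Gy) as [e2 [He2 H2]].
  assert (Hmin : 0 < Rmin e1 e2) by (apply Rmin_glb_lt; auto).
  exists y, (Rmin e1 e2 / 2); split; [lra|].
  intros w Hw. pose proof (Rmin_l e1 e2). pose proof (Rmin_r e1 e2).
  split; [apply H1 | apply H2]; lra.
Qed.

Section Compact.
Hypothesis Hc : is_compact d.

Lemma nested_closed_balls_meet (c : nat -> X) (e : nat -> R) :
  (forall m, 0 < e m) ->
  (forall m w, d (c (S m)) w <= e (S m) -> d (c m) w <= e m) ->
  exists x, forall m, d (c m) x <= e m.
Proof.
  intros Hpos Hnext.
  assert (Hnest : forall m p w, (m <= p)%nat -> d (c p) w <= e p -> d (c m) w <= e m).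
  { intros m p w Hmp. induction Hmp; auto. }
  apply NNPP. intro Hno.
  destruct (Hc nat (fun m x => e m < d (c m) x)) as [l Hl].
  - intro m. apply closed_ball_complement_open.
  - intro x. apply NNPP. intro Hx. apply Hno. exists x. intro m.
    apply Rnot_lt_le. intro Hlt. apply Hx. exists m. exact Hlt.
  - destruct (list_upper_bound l) as [M HM].
    destruct (Hl (c M)) as [i [Hi Hout]].
    assert (Hin := Hnest i M (c M) (HM i Hi)).
    rewrite dist_self in Hin. specialize (Hin (Rlt_le _ _ (Hpos M))). lra.
Qed.

Lemma baire_compact (x0 : X) (G : nat -> X -> Prop) :
  (forall m, is_open d (G m)) -> (forall m, is_dense d (G m)) ->
  exists x, forall m, G m x.
Proof.
  intros HGo HGd.
  destruct (functional_choice (fun (p : nat * (X * R)) (q : X * R) =>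
      0 < snd (snd p) -> 0 < snd q /\ forall w, d (fst q) w <= snd q ->
        d (fst (snd p)) w < snd (snd p) /\ G (fst p) w)) as [step Hstep].
  { intros [m [c e]]. simpl. destruct (Rlt_dec 0 e) as [He|He].
    - destruct (closed_ball_in_dense_open (G m) c e (HGo m) (HGd m) He)
        as [c' [e' H]]. exists (c', e'). auto.
    - exists (c, e). intro; lra. }
  pose (s := fix s (m : nat) : X * R :=
               match m with 0%nat => (x0, 1) | S m => step (m, s m) end).
  assert (Hpos : forall m, 0 < snd (s m)).
  { induction m as [|m IH]; simpl; [lra | apply (Hstep (m, s m) IH)]. }
  assert (Hnext : forall m w, d (fst (s (S m))) w <= snd (s (S m)) ->
                              d (fst (s m)) w < snd (s m) /\ G m w).
  { intros m w. apply (Hstep (m, s m) (Hpos m)). }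
  destruct (nested_closed_balls_meet (fun m => fst (s m)) (fun m => snd (s m)) Hpos)
    as [x Hx].
  - intros m w Hw. left. apply (Hnext m w Hw).
  - exists x. intro m. apply (Hnext m x (Hx (S m))).
Qed.

Lemma countable_ball_base (x0 : X) :
  exists (C : nat -> X) (rho : nat -> R), (forall p, 0 < rho p) /\
    forall U y, is_open d U -> U y -> exists p, forall w, d (C p) w < rho p -> U w.
Proof.
  assert (Hrad : forall m, 0 < / (INR m + 1)).
  { intro m. apply Rinv_0_lt_compat. pose proof (pos_INR m). lra. }
  assert (Hnet : forall m : nat, exists l : list X,
             forall y, exists c, In c l /\ d c y < / (INR m + 1)).
  { intro m. apply (Hc X (fun c y => d c y < / (INR m + 1))).
    - intro c. apply ball_open.
    - intro x. exists x. rewrite dist_self. apply Hrad. }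
  destruct (functional_choice _ Hnet) as [L HL].
  exists (fun p => nth (snd (of_nat p)) (L (fst (of_nat p))) x0),
         (fun p => / (INR (fst (of_nat p)) + 1)).
  split; [intro p; apply Hrad|].
  intros U y HU Uy. destruct (HU y Uy) as [e [He Hy]].
  destruct (archimed_cor1 (e / 2) ltac:(lra)) as [N [HN HN0]].
  destruct (HL N y) as [c [Hc1 Hc2]].
  destruct (In_nth _ _ x0 Hc1) as [j [_ Hj]].
  exists (to_nat (N, j)). rewrite cancel_of_to. simpl. rewrite Hj.
  assert (Hle : / (INR N + 1) <= / INR N).
  { apply Rinv_le_contravar; [apply lt_0_INR; exact HN0 | lra]. }
  intros w Hw. apply Hy.
  pose proof (dist_triangle y c w). rewrite (dist_sym y c) in *. lra.
Qed.

End Compact.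
End Metric.

Fixpoint decode_tuple (r : nat) (p : nat) : nat -> nat :=
  match r with
  | 0%nat => fun _ => 0%nat
  | S r => fun i => match i with
                    | 0%nat => fst (of_nat p)
                    | S i => decode_tuple r (snd (of_nat p)) i
                    end
  end.

Lemma decode_tuple_surj (r : nat) (n : nat -> nat) :
  exists p, forall i, (i < r)%nat -> decode_tuple r p i = n i.
Proof.
  revert n. induction r as [|r IH]; intro n.
  - exists 0%nat; intros; lia.
  - destruct (IH (fun i => n (S i))) as [p Hp]. exists (to_nat (n 0%nat, p)).
    intros [|i] Hi; cbn [decode_tuple]; rewrite cancel_of_to; cbn [fst snd];
      [reflexivity | apply Hp; lia].
Qed.

Section Dynamics.
Variables (X : Type) (d : X -> X -> R) (f : X -> X) (r : nat) (a : nat -> nat).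
Hypothesis Hd : is_metric d.
Hypothesis Hf : is_continuous d f.
Hypothesis Ha_pos : forall i, (i < r)%nat -> (1 <= a i)%nat.

Definition Delta_point (x : X) : Prop :=
  forall z : nat -> X, forall eps, 0 < eps -> forall N : nat,
    exists n : nat, (N <= n)%nat /\
      forall i, (i < r)%nat -> d (Nat.iter (a i * n)%nat f x) (z i) < eps.

Notation Fa_point := (is_F_transitive_point d f (Fa r a)).

Lemma Delta_point_visits (x : X) (W : nat -> X -> Prop) (N : nat) :
  Delta_point x ->
  (forall i, (i < r)%nat -> is_open d (W i)) ->
  (forall i, (i < r)%nat -> exists y, W i y) ->
  exists n, (N <= n)%nat /\ forall i, (i < r)%nat -> W i (Nat.iter (a i * n) f x).
Proof.
  intros Hx HWo HWne.
  destruct (finite_choice x r W HWne) as [z Hz].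
  destruct (finite_common_radius r (fun i e => forall w, d (z i) w < e -> W i w))
    as [eps [Heps Hball]].
  - intros i e e' He' Hp w Hw. apply Hp. lra.
  - intros i Hi. exact (HWo i Hi (z i) (Hz i Hi)).
  - destruct (Hx z eps Heps N) as [n [HN Hn]].
    exists n. split; [exact HN|]. intros i Hi.
    apply Hball; [exact Hi|]. rewrite (dist_sym X d Hd). apply Hn; exact Hi.
Qed.

Lemma Delta_point_Fa_point (x : X) : Delta_point x -> Fa_point x.
Proof.
  intros Hx U HU [y Uy] n.
  pose (W := fun i w => U (Nat.iter (n i) f w)).
  assert (HWne : forall i, (i < r)%nat -> exists w, W i w).
  { intros i Hi.
    destruct (Delta_point_visits x (fun _ => U) (n i) Hx (fun _ _ => HU)
                (fun _ _ => ex_intro _ y Uy)) as [m [Hm Hvisit]].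
    exists (Nat.iter (a i * m - n i) f x). unfold W. rewrite <- iter_add.
    rewrite (iter_eq f _ (a i * m)); [apply Hvisit; exact Hi|].
    specialize (Ha_pos i Hi). nia. }
  destruct (Delta_point_visits x W 1 Hx
              (fun i _ => open_preimage X d _ U (iter_continuous X d f (n i) Hf) HU)
              HWne) as [m [Hm Hvisit]].
  exists m. split; [exact Hm|]. intros i Hi. split.
  - specialize (Ha_pos i Hi). nia.
  - rewrite (iter_eq f _ (n i + a i * m)) by lia. rewrite iter_add.
    apply Hvisit; exact Hi.
Qed.

Lemma Fa_point_hits (x : X) (i : nat) (U : X -> Prop) :
  Fa_point x -> (i < r)%nat -> is_open d U -> (exists y, U y) ->
  exists m, U (Nat.iter m f x).
Proof.
  intros Hx Hi HU Hne.
  destruct (Hx U HU Hne (fun _ => 0%nat)) as [k [_ Hk]].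
  exists (k * a i + 0)%nat. apply (Hk i Hi).
Qed.

Lemma Fa_point_Delta_point (x : X) : Fa_point x -> Delta_point x.
Proof.
  intros Hx z eps Heps N.
  assert (Hball_ne : forall i, exists w, d (z i) w < eps)
    by (intro i; apply (ball_nonempty X d Hd _ _ Heps)).
  destruct (finite_choice 0%nat r (fun i m => d (z i) (Nat.iter m f x) < eps))
    as [m Hm].
  { intros i Hi. exact (Fa_point_hits x i _ Hx Hi (ball_open X d Hd _ _) (Hball_ne i)). }
  destruct (finite_upper_bound r m) as [c Hc].
  pose (W := fun w => forall i, (i < r)%nat -> d (z i) (Nat.iter (m i) f w) < eps).
  assert (HW : is_open d W).
  { apply open_finite_inter. intros i Hi.
    apply (open_preimage X d _ (fun v => d (z i) v < eps));
      [apply iter_continuous; exact Hf | apply ball_open; exact Hd]. }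
  pose (C := (c + N)%nat).
  destruct (Hx W HW (ex_intro _ x Hm) (fun i => a i * C - m i)%nat) as [k [Hk Hret]].
  exists (k + C)%nat. split; [unfold C; lia|].
  intros i Hi. destruct (Hret i Hi) as [_ HWi].
  specialize (HWi i Hi). rewrite <- iter_add in HWi. rewrite (dist_sym X d Hd).
  rewrite (iter_eq f _ (m i + (k * a i + (a i * C - m i)))); [exact HWi|].
  specialize (Ha_pos i Hi). specialize (Hc i Hi). unfold C. nia.
Qed.

(* F[a]-transitive points are invariant under f: the family F[a] is stable
   under shifting its members back by t. *)
Lemma Fa_point_iterate (x : X) (t : nat) : Fa_point x -> Fa_point (Nat.iter t f x).
Proof.
  intros Hx U HU Hne n.
  destruct (Hx U HU Hne (fun i => n i + t)%nat) as [k [Hk Hret]].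
  exists k. split; [exact Hk|]. intros i Hi. destruct (Hret i Hi) as [_ HU'].
  split.
  - specialize (Ha_pos i Hi). nia.
  - rewrite <- iter_add. rewrite (iter_eq f _ (k * a i + (n i + t))) by lia. exact HU'.
Qed.

Lemma Fa_points_dense (x : X) : Fa_point x -> is_dense d Fa_point.
Proof.
  intros Hx V HV Hne. destruct (Compare_dec.zerop r) as [Hr|Hr].
  - (* for r = 0 the family F[0] contains every set *)
    destruct Hne as [v Vv]. exists v. split; [exact Vv|].
    intros U _ _ n. exists 1%nat. split; [lia | intros; lia].
  - destruct (Fa_point_hits x 0 V Hx Hr HV Hne) as [t Ht].
    exists (Nat.iter t f x). split; [exact Ht | apply Fa_point_iterate; exact Hx].
Qed.

(* Given a countable family of balls B_b = B(C b, rho b), the points whose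
   orbit returns to B_b at the times k a_i + n_i, for the offsets n encoded
   by p, where q encodes (b, p). *)
Definition return_set (C : nat -> X) (rho : nat -> R) (q : nat) (y : X) : Prop :=
  exists k, (1 <= k)%nat /\ forall i, (i < r)%nat ->
    d (C (fst (of_nat q)))
      (Nat.iter (k * a i + decode_tuple r (snd (of_nat q)) i) f y)
    < rho (fst (of_nat q)).

Lemma return_set_open (C : nat -> X) (rho : nat -> R) (q : nat) :
  is_open d (return_set C rho q).
Proof.
  intros y [k [Hk Hy]].
  set (b := fst (of_nat q)) in *. set (p := snd (of_nat q)) in *.
  destruct (open_finite_inter X d r
    (fun i w => d (C b) (Nat.iter (k * a i + decode_tuple r p i) f w) < rho b))
    with (x := y) as [e [He Hball]].
  - intros i Hi. apply (open_preimage X d _ (fun v => d (C b) v < rho b));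
      [apply iter_continuous; exact Hf | apply ball_open; exact Hd].
  - exact Hy.
  - exists e. split; [exact He|]. intros w Hw. exists k. split; auto.
Qed.

Lemma Fa_point_in_return_set (C : nat -> X) (rho : nat -> R) (q : nat) (y : X) :
  (forall b, 0 < rho b) -> Fa_point y -> return_set C rho q y.
Proof.
  intros Hrho Hy.
  destruct (Hy _ (ball_open X d Hd (C (fst (of_nat q))) (rho (fst (of_nat q))))
              (ball_nonempty X d Hd _ _ (Hrho _)) (decode_tuple r (snd (of_nat q))))
    as [k [Hk Hret]].
  exists k. split; [exact Hk|]. intros i Hi. apply (Hret i Hi).
Qed.

Lemma return_sets_Fa_point (C : nat -> X) (rho : nat -> R) (y : X) :
  (forall U w, is_open d U -> U w -> exists b, forall v, d (C b) v < rho b -> U v) ->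
  (forall q, return_set C rho q y) -> Fa_point y.
Proof.
  intros Hbase Hy U HU [u Uu] n.
  destruct (Hbase U u HU Uu) as [b Hb].
  destruct (decode_tuple_surj r n) as [p Hp].
  destruct (Hy (to_nat (b, p))) as [k [Hk Hret]].
  rewrite cancel_of_to in Hret. simpl in Hret.
  exists k. split; [exact Hk|]. intros i Hi. split.
  - specialize (Ha_pos i Hi). nia.
  - rewrite <- (Hp i Hi). apply Hb. apply Hret; exact Hi.
Qed.

Lemma Fa_points_residual (x0 : X) (Hc : is_compact d) :
  F_point_transitive d f (Fa r a) -> is_residual d Fa_point.
Proof.
  intros [x Hx].
  destruct (countable_ball_base X d Hd Hc x0) as [C [rho [Hrho Hbase]]].
  exists (return_set C rho). split; [|split].
  - apply return_set_open.
  - intros q V HV Hne.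
    destruct (Fa_points_dense x Hx V HV Hne) as [y [Vy Ty]].
    exists y. split; [exact Vy | apply Fa_point_in_return_set; assumption].
  - intros y Hy. apply (return_sets_Fa_point C rho); assumption.
Qed.

End Dynamics.

Theorem theorem5p6 (X : Type) (d : X -> X -> R) (x0 : X)
  (Hd : is_metric d) (Hc : is_compact d)
  (f : X -> X) (Hf : is_continuous d f)
  (r : nat) (a : nat -> nat) (Ha : in_Nr_star r a) :
  (Delta_a_transitive d f r a <-> F_point_transitive d f (Fa r a)) /\
  (F_point_transitive d f (Fa r a) <->
     is_residual d (is_F_transitive_point d f (Fa r a))).
Proof.
  destruct Ha as [Ha_pos _].
  split; split.
  - intros [x Hx]. exists x. exact (Delta_point_Fa_point X d f r a Hd Hf Ha_pos x Hx).
  - intros [x Hx]. exists x. exact (Fa_point_Delta_point X d f r a Hd Hf Ha_pos x Hx).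
  - exact (Fa_points_residual X d f r a Hd Hf Ha_pos x0 Hc).
  - intros [G [Hopen [Hdense Hsub]]].
    destruct (baire_compact X d Hd Hc x0 G Hopen Hdense) as [x Hx].
    exists x. apply Hsub. exact Hx.
Qed.
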